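(* Let $n_j:=2^{2^j}$ and $t_n:=1/n$. For $i>j\ge100$ and $0\le k\le n_j$ we have $f_{n_i}(t_{n_j})=0$ and $f_{n_i}(x_{k,n_j})=0$.
   Context: Nodes: $x_{k,n}:=2k/n-1$, $k=0,\dots,n$. For $m$ such that $\sqrt m$ is an integer multiple of $4$, define $f_m:\mathbb{R}\to\mathbb{R}$ by: $f_m(x)=0$ for $x<1/m$ or $x\ge(\sqrt m-3)/m$; $f_m(x)=x-1/m$ for $1/m\le x<2/m$; $f_m(x)=\frac{4p+3}{m}-x$ for $0\le p\le\frac{\sqrt m-8}{4}$ and $\frac{4p+2}{m}\le x<\frac{4p+4}{m}$; $f_m(x)=x-\frac{4p+1}{m}$ for $1\le p\le\frac{\sqrt m-8}{4}$ and $\frac{4p}{m}\le x<\frac{4p+2}{m}$; $f_m(x)=x-\frac{\sqrt m-3}{m}$ for $\frac{\sqrt m-4}{m}\le x<\frac{\sqrt m-3}{m}$. *)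

From Stdlib Require Import Reals Lra ClassicalEpsilon.
Open Scope R_scope.

Definition node (k n : nat) : R := 2 * INR k / INR n - 1.

(* The piecewise definition of f_m, as a graph relation: f_graph m x y
   means "f_m(x) = y" according to the clauses of the paper
   (meaningful when sqrt m is an integer multiple of 4). *)
Definition f_graph (m : nat) (x y : R) : Prop :=
  let M := INR m in
  let s := sqrt M in
  ((x < 1 / M \/ (s - 3) / M <= x) /\ y = 0)
  \/ (1 / M <= x < 2 / M /\ y = x - 1 / M)
  \/ (exists p : nat, INR p <= (s - 8) / 4 /\
        (4 * INR p + 2) / M <= x < (4 * INR p + 4) / M /\
        y = (4 * INR p + 3) / M - x)
  \/ (exists p : nat, (1 <= p)%nat /\ INR p <= (s - 8) / 4 /\
        (4 * INR p) / M <= x < (4 * INR p + 2) / M /\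
        y = x - (4 * INR p + 1) / M)
  \/ ((s - 4) / M <= x < (s - 3) / M /\ y = x - (s - 3) / M).

(* f_m(x): the (unique, for admissible m) value given by the clauses. *)
Definition fm (m : nat) (x : R) : R :=
  epsilon (inhabits 0) (fun y => f_graph m x y).

Definition nn (j : nat) : nat := (2 ^ (2 ^ j))%nat.

Definition t (n : nat) : R := 1 / INR n.

(* Every clause of [f_graph m] other than the first lives on [[1/m, (sqrt m - 3)/m)], so [f_m]
   vanishes off that interval.  For [m = a^2] with [a >= n] one has
   [(sqrt m - 3)/m = (a - 3)/a^2 < 1/a <= 1/n], while every node [x_{k,n} = (2k - n)/n] is
   either [<= 0] or [>= 1/n]; and [n_i = n_{i-1}^2] with [n_{i-1} >= n_j]. *)
From Stdlib Require Import Reals Lra Lia ClassicalEpsilon.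
Open Scope R_scope.

Lemma Rdiv_le_compat_r (c a b : R) : 0 < c -> a <= b -> a / c <= b / c.
Proof.
  intros Hc Hab. apply Rmult_le_compat_r; [left; apply Rinv_0_lt_compat|]; assumption.
Qed.

Lemma f_graph_support (m : nat) (x y : R) :
  0 < INR m -> 5 <= sqrt (INR m) -> f_graph m x y ->
  y = 0 \/ 1 / INR m <= x < (sqrt (INR m) - 3) / INR m.
Proof.
  intros HM Hs Hf. unfold f_graph in Hf. cbv zeta in Hf.
  set (M := INR m) in *. set (s := sqrt M) in *.
  assert (widen : forall lo hi, 1 <= lo -> hi <= s - 3 ->
            lo / M <= x < hi / M -> 1 / M <= x < (s - 3) / M).
  { intros lo hi Hlo Hhi [Hx1 Hx2].
    pose proof (Rdiv_le_compat_r M _ _ HM Hlo).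
    pose proof (Rdiv_le_compat_r M _ _ HM Hhi). lra. }
  destruct Hf as [[_ Hy] | [[Hx _] | [[p [Hp [Hx _]]] | [[p [Hp1 [Hp [Hx _]]]] | [Hx _]]]]].
  - left; exact Hy.
  - right; apply (widen 1 2); lra.
  - right; pose proof (pos_INR p); apply (widen (4 * INR p + 2) (4 * INR p + 4)); lra.
  - right; apply le_INR in Hp1; simpl in Hp1.
    apply (widen (4 * INR p) (4 * INR p + 2)); lra.
  - right; apply (widen (s - 4) (s - 3)); lra.
Qed.

Lemma fm_eq0 (m : nat) (x : R) :
  0 < INR m -> 5 <= sqrt (INR m) ->
  x < 1 / INR m \/ (sqrt (INR m) - 3) / INR m <= x -> fm m x = 0.
Proof.
  intros HM Hs Hx.
  assert (Hf : f_graph m x (fm m x)).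
  { unfold fm. apply epsilon_spec. exists 0. left. split; [exact Hx | reflexivity]. }
  destruct (f_graph_support m x (fm m x) HM Hs Hf); [assumption | lra].
Qed.

Lemma fm_sqr_eq0 (a n : nat) (x : R) :
  (5 <= a)%nat -> (0 < n <= a)%nat -> x <= 0 \/ 1 / INR n <= x ->
  fm (a * a) x = 0.
Proof.
  intros Ha [Hn Hna] Hx.
  apply le_INR in Ha, Hna. apply lt_INR in Hn. simpl in Ha, Hn.
  set (A := INR a) in *. set (N := INR n) in *.
  apply fm_eq0; rewrite mult_INR; fold A; rewrite ?sqrt_square by lra; [nra | lra |].
  destruct Hx as [Hx | Hx].
  - left. assert (0 < 1 / (A * A)) by (apply Rdiv_lt_0_compat; nra). lra.
  - right.
    assert (Hsplit : (A - 3) / (A * A) = 1 / A - 3 / (A * A)) by (field; lra).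
    assert (0 < 3 / (A * A)) by (apply Rdiv_lt_0_compat; nra).
    assert (1 / A <= 1 / N).
    { unfold Rdiv. apply Rmult_le_compat_l; [lra|]. apply Rinv_le_contravar; lra. }
    lra.
Qed.

Lemma node_nonpos_or_ge_inv (k n : nat) :
  (0 < n)%nat -> node k n <= 0 \/ 1 / INR n <= node k n.
Proof.
  intros Hn. apply lt_INR in Hn. simpl in Hn.
  assert (Hnode : node k n = (2 * INR k - INR n) / INR n) by (unfold node; field; lra).
  rewrite Hnode.
  destruct (Compare_dec.le_lt_dec (2 * k) n) as [Hk | Hk];
    apply le_INR in Hk; rewrite ?S_INR, mult_INR in Hk; simpl in Hk.
  - left. rewrite <- (Rdiv_0_l (INR n)). apply Rdiv_le_compat_r; lra.
  - right. apply Rdiv_le_compat_r; lra.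
Qed.

Lemma nn_succ (i : nat) : nn (S i) = (nn i * nn i)%nat.
Proof. unfold nn. rewrite Nat.pow_succ_r', <- Nat.pow_add_r. f_equal. lia. Qed.

Lemma nn_pos (i : nat) : (0 < nn i)%nat.
Proof. unfold nn. apply Nat.neq_0_lt_0, Nat.pow_nonzero. lia. Qed.

Lemma nn_le_mono (i j : nat) : (j <= i)%nat -> (nn j <= nn i)%nat.
Proof.
  intros Hji. unfold nn. apply Nat.pow_le_mono_r; [lia|].
  apply Nat.pow_le_mono_r; lia.
Qed.

Theorem lemma3 (i j : nat) (hj : (100 <= j)%nat) (hij : (j < i)%nat) :
  fm (nn i) (t (nn j)) = 0 /\
  (forall k : nat, (k <= nn j)%nat -> fm (nn i) (node k (nn j)) = 0).
Proof.
  destruct i as [|i]; [lia|]. rewrite nn_succ.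
  assert (Hbig : (5 <= nn i)%nat).
  { apply Nat.le_trans with (nn 2); [unfold nn; simpl; lia | apply nn_le_mono; lia]. }
  assert (Hrange : (0 < nn j <= nn i)%nat).
  { split; [apply nn_pos | apply nn_le_mono; lia]. }
  split.
  - apply (fm_sqr_eq0 _ (nn j)); [assumption | assumption |].
    right. apply Rle_refl.
  - intros k _. apply (fm_sqr_eq0 _ (nn j)); [assumption | assumption |].
    apply node_nonpos_or_ge_inv, nn_pos.
Qed.
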